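(* Let $K$ and $K'$ be oriented virtual knot diagrams related by a finite sequence of classical Reidemeister II and III moves and virtual Reidemeister moves (including the mixed move), i.e. all classical and virtual Reidemeister moves except the classical Reidemeister I move. Then $\gamma(K)=\gamma(K')$ and $\bar\gamma(K)=\bar\gamma(K')$.
   Context: A virtual knot diagram is an immersion of one circle in the plane with classical crossings (over/under information) and virtual crossings; virtual knots are equivalence classes under classical and virtual Reidemeister moves. Fix an orientation. Each classical crossing $c$ has a sign $sgn(c)\in\{\pm1\}$ (the usual right-hand rule sign). For a classical crossing $c$ of $K$, let $K_c$ be the two-component oriented virtual link diagram obtained by smoothing $c$ in the orientation-respecting way (the ''vertical smoothing''), with inherited orientation. Let $L(K_c)$ be the sum of the signs of all classical crossings of $K_c$ at which the two strands belong to different components (no division by two), and $\bar L(K_c)=L(K_c) \bmod 2\in\{0,1\}$. Define $\gamma(K)=\sum_{c} t^{\bar L(K_c)}\,sgn(c)$, the sum over all classical crossings of $K$; this is an element $a+bt$ of the free $\mathbb{Z}$-module on $\{1,t\}$. Define $\bar\gamma(K)=\gamma(K) \bmod 2$, i.e. $\gamma(K)$ with coefficients reduced modulo $2$. *)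

(* Virtual knot diagrams are modelled by their Gauss diagrams
   (signed Gauss words read along the oriented circle), the standard
   combinatorial model of virtual knots (Goussarov-Polyak-Viro, Kauffman):
   virtual Reidemeister moves (incl. the mixed move) do not change the Gauss
   diagram, and classical R2/R3 moves become the Gauss-diagram moves below. *)
From Stdlib Require Import Relations.
From HB Require Import structures.
From mathcomp Require Import all_boot all_order all_algebra.
Set Implicit Arguments. Unset Strict Implicit. Unset Printing Implicit Defensive.
Import GRing.Theory Num.Theory.
Local Open Scope ring_scope.

(* A letter of a Gauss word: (crossing label, is over-passage, sign is +1). *)
Definition letter := (nat * bool * bool)%type.
Definition lab (l : letter) : nat := l.1.1.
Definition ovr (l : letter) : bool := l.1.2.
Definition pos (l : letter) : bool := l.2.

Definition gauss_wf (w : seq letter) : Prop :=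
  forall n, n \in map lab w ->
    count (fun l => (lab l == n) && ovr l) w = 1%N /\
    count (fun l => (lab l == n) && ~~ ovr l) w = 1%N /\
    {in w &, forall l1 l2, lab l1 = n -> lab l2 = n -> pos l1 = pos l2}.

Definition sgnz (l : letter) : int := if pos l then 1 else -1.

Definition io (w : seq letter) (n : nat) : nat := find (fun l => (lab l == n) && ovr l) w.
Definition iu (w : seq letter) (n : nat) : nat := find (fun l => (lab l == n) && ~~ ovr l) w.

Definition inside (i j k : nat) : bool := (minn i j < k)%N && (k < maxn i j)%N.

(* After smoothing crossing n, the two components are the two arcs of the
   circle between the passages of n; crossing m is an inter-component crossing
   of K_n iff exactly one of its passages lies on the arc strictly between. *)
Definition linked (w : seq letter) (n m : nat) : bool :=
  inside (io w n) (iu w n) (io w m) != inside (io w n) (iu w n) (iu w m).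

(* the crossings, each listed once (via its over-passage letter) *)
Definition overs (w : seq letter) : seq letter := [seq l <- w | ovr l].

Definition Lk (w : seq letter) (n : nat) : int :=
  \sum_(l <- overs w | (lab l != n) && linked w n (lab l)) sgnz l.

Definition Lbar (w : seq letter) (n : nat) : nat := (absz (Lk w n) %% 2)%N.

Definition gamma (w : seq letter) : {poly int} :=
  \sum_(l <- overs w) (sgnz l)%:P * 'X^(Lbar w (lab l)).

Definition gammabar (w : seq letter) : {poly 'Z_2} :=
  map_poly (fun z : int => z%:~R) (gamma w).

Definition seg (o : bool) (x y : letter) : letter * letter := if o then (x, y) else (y, x).

(* Three arcs T (top), M (middle), B (bottom) of an R3 triangle, each given by
   its two consecutive passages: crossing a = T over M, b = T over B,
   c = M over B.  The booleans oT, oM, oB record the order along each arc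
   (a before b on T, a before c on M, b before c on B); the last two
   conditions are exactly the realizability of the triangle by three
   oriented lines with the given crossing signs. *)
Definition r3_config (T M B : letter * letter) : Prop :=
  exists (a b c : nat) (sa sb sc oT oM oB : bool),
    uniq [:: a; b; c] /\
    T = seg oT (a, true, sa) (b, true, sb) /\
    M = seg oM (a, false, sa) (c, true, sc) /\
    B = seg oB (b, false, sb) (c, false, sc) /\
    (oT == sc) = (oM == sb) /\ (oM == sb) = (oB == sa).

Definition r3_triple (s1 s2 s3 : letter * letter) : Prop :=
  r3_config s1 s2 s3 \/ r3_config s1 s3 s2 \/ r3_config s2 s1 s3 \/
  r3_config s2 s3 s1 \/ r3_config s3 s1 s2 \/ r3_config s3 s2 s1.

Definition pair2 (p : letter * letter) : seq letter := [:: p.1; p.2].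
Definition swap2 (p : letter * letter) : seq letter := [:: p.2; p.1].

Definition relab (f : nat -> nat) (l : letter) : letter := (f (lab l), ovr l, pos l).

Inductive gstep : seq letter -> seq letter -> Prop :=
(* the word is cyclic: choice of base point *)
| gs_rot n w : gstep w (rot n w)
| gs_relab (f : nat -> nat) w : injective f -> gstep w (map (relab f) w)
(* classical Reidemeister II: two new crossings p, q of opposite signs, one
   arc passing over twice, another arc passing under twice (either order) *)
| gs_R2 u v x (p q : nat) (s o : bool) :
    p != q -> p \notin map lab (u ++ v ++ x) -> q \notin map lab (u ++ v ++ x) ->
    gstep (u ++ v ++ x)
      (u ++ [:: (p, true, s); (q, true, ~~ s)] ++ v ++
         (if o then [:: (p, false, s); (q, false, ~~ s)]
               else [:: (q, false, ~~ s); (p, false, s)]) ++ x)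
| gs_R3 u v y z s1 s2 s3 : r3_triple s1 s2 s3 ->
    gstep (u ++ pair2 s1 ++ v ++ pair2 s2 ++ y ++ pair2 s3 ++ z)
          (u ++ swap2 s1 ++ v ++ swap2 s2 ++ y ++ swap2 s3 ++ z).

Definition r23_equiv : seq letter -> seq letter -> Prop := clos_refl_sym_trans _ gstep.

From mathcomp Require Import all_boot all_order all_algebra zify.
Set Implicit Arguments. Unset Strict Implicit. Unset Printing Implicit Defensive.
Import GRing.Theory Num.Theory.

(* Smoothing crossing c splits the Gauss word into the two arcs between the
   passages of c, and another crossing is inter-component iff exactly one of
   its passages lies strictly between those of c.  Hence L(K_c) has the
   parity of the number of letters strictly between the two passages of c,
   so \bar L(K_c) only records whether these passages sit at positions of
   equal parity.  Changing the base point shifts every position by the same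
   amount; an R2 move inserts two blocks of even length, and the two new
   crossings have opposite signs and equal exponents; an R3 move transposes
   three adjacent pairs of letters, which flips the position parity of
   exactly the passages of the triangle, and each crossing has either both
   or none of its passages there. *)

Definition dual (l : letter) : letter := (lab l, ~~ ovr l, pos l).

Lemma dualK : involutive dual.
Proof. by case=> [[n o] s]; rewrite /dual /= negbK. Qed.

Lemma dual_inj : injective dual.
Proof. exact: inv_inj dualK. Qed.

Lemma letter_eq (x y : letter) :
  lab x = lab y -> ovr x = ovr y -> pos x = pos y -> x = y.
Proof. by case: x y => [[? ?] ?] [[? ?] ?]; rewrite /lab /ovr /pos /= => -> -> ->. Qed.

Lemma lab_dual l : lab (dual l) = lab l. Proof. by []. Qed.
Lemma ovr_dual l : ovr (dual l) = ~~ ovr l. Proof. by []. Qed.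

Lemma gauss_wfP w :
  gauss_wf w <->
  [/\ uniq w, {in w, forall l, dual l \in w}
    & {in w &, forall x y, lab x = lab y -> ovr x = ovr y -> x = y}].
Proof.
split=> [wf | [uw dw iw] _ /mapP[l lw ->]].
  have level l b : l \in w -> count (fun y => (lab y == lab l) && (ovr y == b)) w = 1%N.
    move=> lw; have [|co [cu _]] := wf (lab l); first exact: map_f.
    by case: b; [rewrite -co | rewrite -cu]; apply: eq_count => y; rewrite ?eqb_id ?eqbF_neg.
  have iw : {in w &, forall x y, lab x = lab y -> ovr x = ovr y -> x = y}.
    move=> x y xw yw exy oxy; have [|_ [_ sgn]] := wf (lab x); first exact: map_f.
    by apply: letter_eq => //; apply: sgn.
  split=> // [|l lw].
    apply: count_mem_uniq => x; case xw: (x \in w); last exact/count_memPn/negbT.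
    change (count_mem x w = 1%N); apply/anti_leq.
    rewrite -has_count has_pred1 xw andbT -(level x (ovr x) xw).
    by apply: sub_count => y /eqP ->; rewrite !eqxx.
  have /hasP[y yw /andP[/eqP ey /eqP oy]] :
      has (fun y => (lab y == lab l) && (ovr y == ~~ ovr l)) w by rewrite has_count level.
  have [|_ [_ sgn]] := wf (lab l); first exact: map_f.
  suff -> : dual l = y by [].
  by apply: letter_eq; rewrite ?ey ?oy //=; apply: sgn.
have level b : count (fun y => (lab y == lab l) && (ovr y == b)) w = 1%N.
  have [x xw [ex ox]] : exists2 x : letter, x \in w & lab x = lab l /\ ovr x = b.
    have [<- | nb] := eqVneq (ovr l) b; first by exists l.
    exists (dual l); first exact: dw.
    by rewrite ovr_dual; split=> //; move: nb; case: (ovr l); case: b.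
  have /= <- : count_mem x w = true by rewrite (count_uniq_mem x uw) xw.
  apply: eq_in_count => y yw /=; apply/andP/eqP => [[/eqP eyl /eqP oyb] | ->].
    by apply: iw; rewrite ?ex ?ox.
  by rewrite ex ox.
split; [rewrite -(level true) | split; [rewrite -(level false) |]].
- by apply: eq_count => y; rewrite eqb_id.
- by apply: eq_count => y; rewrite eqbF_neg.
move=> x y xw yw ex ey; case: (eqVneq (ovr x) (ovr y)) => [oxy | nxy].
  by rewrite (iw x y) // ex ey.
rewrite (iw y (dual x)) ?dw //; first by rewrite lab_dual ex ey.
by move: nxy; rewrite ovr_dual; case: (ovr x); case: (ovr y).
Qed.

Lemma find_unique_index (T : eqType) (s : seq T) (P : pred T) x :
  x \in s -> P x -> {in s, forall y, P y -> y = x} -> find P s = index x s.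
Proof.
move=> xs Px uP; apply: eq_in_find => y ys /=.
by apply/idP/eqP => [/(uP y ys) | ->].
Qed.

Lemma io_index w l : gauss_wf w -> l \in w -> ovr l -> io w (lab l) = index l w.
Proof.
case/gauss_wfP=> _ _ iw lw ol; apply: find_unique_index => //; first by rewrite eqxx.
by move=> y yw /andP[/eqP ey oy]; apply: iw; rewrite ?ol.
Qed.

Lemma iu_index w l : gauss_wf w -> l \in w -> ovr l -> iu w (lab l) = index (dual l) w.
Proof.
case/gauss_wfP=> _ dw iw lw ol.
apply: find_unique_index => [|/=|y yw /andP[/eqP ey /negbTE oy]]; first exact: dw.
  by rewrite lab_dual ovr_dual eqxx ol.
by apply: iw; rewrite ?dw // ovr_dual ol.
Qed.

Lemma dual_overs w : gauss_wf w -> perm_eq (map dual (overs w)) [seq l <- w | ~~ ovr l].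
Proof.
case/gauss_wfP=> uw dw _; apply: uniq_perm.
- by rewrite (map_inj_uniq dual_inj) filter_uniq.
- exact: filter_uniq.
move=> y; rewrite mem_filter; apply/mapP/andP => [[x] | [oy yw]].
  by rewrite /overs mem_filter => /andP[ox xw] ->; rewrite ovr_dual ox dw.
by exists (dual y); rewrite ?dualK // /overs mem_filter dw // ovr_dual oy.
Qed.

Lemma gauss_wf_even_size w : gauss_wf w -> ~~ odd (size w).
Proof.
move=> wf; rewrite -(count_predC ovr w) -!size_filter.
by rewrite -(perm_size (dual_overs wf)) size_map addnn odd_double.
Qed.

Lemma odd_absz_sum_sign (T : Type) (s : seq T) (P : pred T) (e : T -> int) :
  (forall x, e x = 1 \/ e x = -1)%R ->
  odd (absz (\sum_(x <- s | P x) e x)%R) = odd (count P s).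
Proof.
move=> e_sign; elim: s => [|x s IHs]; first by rewrite big_nil.
rewrite big_cons /=; case: (P x) => //=; rewrite -IHs.
move: (\sum_(y <- s | P y) e y)%R => z.
have : absz (e x + z)%R = (absz z).+1 \/ (absz (e x + z)%R).+1 = absz z.
  by case: (e_sign x) => ->; lia.
by case=> [-> | <-] //=; rewrite negbK.
Qed.

Lemma odd_count_xor (T : Type) (f g : pred T) s :
  odd (count (fun x => f x (+) g x) s) = odd (count f s) (+) odd (count g s).
Proof. by elim: s => [|x s IHs] //=; rewrite !oddD IHs !oddb addbACA. Qed.

Lemma count_iota_between a b N :
  count (fun k => a < k < b) (iota 0 N) = minn N b - minn N a.+1.
Proof.
elim: N => [|N IHN]; first by rewrite !min0n.
by rewrite -[in iota _ _]addn1 iotaD count_cat IHN /= add0n addn0; lia.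
Qed.

Lemma odd_count_inside i j N : i < N -> j < N -> i != j ->
  odd (count (inside i j) (iota 0 N)) = ~~ (odd i (+) odd j).
Proof.
wlog lt_ij : i j / i < j => [hyp iN jN ij | iN jN _].
  have [/hyp-> // | gt_ij | eq_ij] := ltngtP i j; last by rewrite eq_ij eqxx in ij.
  rewrite addbC -(hyp j i) 1?eq_sym //; congr odd; apply: eq_count => k.
  by rewrite /inside minnC maxnC.
rewrite (eq_count (a2 := fun k => i < k < j)) => [|k]; last first.
  by rewrite /inside (minn_idPl (ltnW lt_ij)) (maxn_idPr (ltnW lt_ij)).
rewrite count_iota_between (minn_idPr (ltnW jN)) (minn_idPr iN).
by rewrite oddB // oddS addbN addbC.
Qed.

Lemma map_index_uniq (T : eqType) (s : seq T) : uniq s -> map (index^~ s) s = iota 0 (size s).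
Proof.
case: s => [|x0 s] // us; apply: (@eq_from_nth _ 0%N); first by rewrite size_map size_iota.
by move=> i; rewrite size_map => lt_i; rewrite (nth_map x0) // nth_iota // index_uniq.
Qed.

Lemma odd_count_overs_dual w (P : pred letter) : gauss_wf w ->
  odd (count (fun l => P l (+) P (dual l)) (overs w)) = odd (count P w).
Proof.
move=> wf; rewrite odd_count_xor -(count_map dual P) (permP (dual_overs wf)).
by rewrite -oddD -count_cat (permP (permEl (perm_filterC ovr w))).
Qed.

Definition oddpos (w : seq letter) (l : letter) : bool := odd (index l w).

Lemma Lbar_oddpos (w : seq letter) (l : letter) : gauss_wf w -> l \in w -> ovr l ->
  Lbar w (lab l) = ~~ (oddpos w l (+) oddpos w (dual l)).
Proof.
rewrite /oddpos => wf lw ol; have [uw dw iw] := (gauss_wfP w).1 wf.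
set i := index l w; set j := index (dual l) w.
have ij : i != j.
  by apply/eqP => /(index_inj l lw (dw _ lw)) /(congr1 ovr); rewrite ovr_dual ol.
rewrite /Lbar /Lk modn2 odd_absz_sum_sign => [|x]; last by rewrite /sgnz; case: pos; [left | right].
rewrite (eq_in_count (a2 := fun x => inside i j (index x w) (+) inside i j (index (dual x) w))).
  rewrite odd_count_overs_dual // -(count_map (index^~ w) (inside i j)) map_index_uniq //.
  by rewrite odd_count_inside // index_mem ?dw.
move=> x; rewrite mem_filter => /andP[ox xw] /=.
rewrite /linked (io_index wf lw ol) (iu_index wf lw ol) (io_index wf xw ox) (iu_index wf xw ox).
have [exl | _] := eqVneq (lab x) (lab l) => /=; last by case: inside; case: inside.
by rewrite (iw x l) // ?ox ?ol // -/i -/j /inside; lia.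
Qed.

Definition gamma_term (p : letter -> bool) (l : letter) : {poly int} :=
  ((sgnz l)%:P * 'X^(~~ (p l (+) p (dual l))))%R.

Definition gamma_parity (w : seq letter) : {poly int} :=
  (\sum_(l <- overs w) gamma_term (oddpos w) l)%R.

Lemma gammaE w : gauss_wf w -> gamma w = gamma_parity w.
Proof.
move=> wf; apply: eq_big_seq => l; rewrite mem_filter => /andP[ol lw].
by rewrite /gamma_term (Lbar_oddpos wf lw ol).
Qed.

Lemma eq_sum_gamma_term (s : seq letter) (p q : letter -> bool) :
  {in s, forall l, p l (+) p (dual l) = q l (+) q (dual l)} ->
  (\sum_(l <- s) gamma_term p l = \sum_(l <- s) gamma_term q l)%R.
Proof. by move=> epq; apply: eq_big_seq => l ls; rewrite /gamma_term epq. Qed.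

Lemma oddpos_catC (s1 s2 : seq letter) t :
  uniq (s1 ++ s2) -> ~~ odd (size (s1 ++ s2)) -> t \in s1 ++ s2 ->
  oddpos (s2 ++ s1) t = oddpos (s1 ++ s2) t (+) odd (size s1).
Proof.
rewrite cat_uniq size_cat oddD mem_cat /oddpos !index_cat => /and3P[_ /hasPn s21 _] ev.
case/orP=> [ts1 | ts2].
  have /negbTE -> : t \notin s2 by apply: contraL ts1; apply: s21.
  by rewrite ts1 oddD addbC; move: ev; case: odd; case: odd.
have /negbTE -> : t \notin s1 by apply: s21.
by rewrite ts2 oddD addbAC addbb addFb.
Qed.

Lemma gamma_parity_rot w k : gauss_wf w -> gamma_parity (rot k w) = gamma_parity w.
Proof.
move=> wf; have [uw dw _] := (gauss_wfP w).1 wf.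
have [/rot_oversize -> // | lt_k] := leqP (size w) k.
rewrite /gamma_parity (perm_big _ (perm_filter ovr (permEl (perm_rot k w)))).
apply: eq_sum_gamma_term => l; rewrite mem_filter => /andP[_ lw].
have ev := gauss_wf_even_size wf; have dlw := dw l lw.
rewrite -(cat_take_drop k w) in uw ev lw dlw.
rewrite /rot !(oddpos_catC uw ev) // cat_take_drop.
by rewrite addbACA addbb addbF.
Qed.

Lemma relab_inj f : injective f -> injective (relab f).
Proof.
by move=> f_inj [[n o] s] [[n' o'] s']; rewrite /relab /lab /ovr /pos /= => -[/f_inj -> -> ->].
Qed.

Lemma dual_relab f l : dual (relab f l) = relab f (dual l).
Proof. by []. Qed.

Lemma gamma_parity_relab f w : injective f -> gamma_parity (map (relab f) w) = gamma_parity w.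
Proof.
move=> f_inj; rewrite /gamma_parity /overs filter_map big_map.
apply: eq_big => // l _; rewrite /gamma_term dual_relab /oddpos !(index_map (relab_inj f_inj)).
by case: l => [[n o] s].
Qed.

Lemma index_adjacent (T : eqType) (s1 s2 : seq T) y z : uniq (s1 ++ y :: z :: s2) ->
  index z (s1 ++ y :: z :: s2) = (index y (s1 ++ y :: z :: s2)).+1.
Proof.
rewrite cat_uniq /= !negb_or => /and3P[_ /andP[ys1 /andP[zs1 _]] /andP[/andP[yz _] _]].
by rewrite !index_cat (negbTE ys1) (negbTE zs1) /= !eqxx (negbTE yz) addn0 addn1.
Qed.

Lemma oddpos_adjacent w s1 s2 y z :
  uniq w -> w = s1 ++ y :: z :: s2 -> oddpos w z = ~~ oddpos w y.
Proof. by move=> uw wE; rewrite /oddpos wE index_adjacent -?wE. Qed.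

Lemma oddpos_insert_even (u P v Q x : seq letter) y :
  y \notin P -> y \notin Q -> ~~ odd (size P) -> ~~ odd (size Q) ->
  oddpos (u ++ P ++ v ++ Q ++ x) y = oddpos (u ++ v ++ x) y.
Proof.
move=> /negbTE yP /negbTE yQ evP evQ; rewrite /oddpos !index_cat yP yQ.
by case: (y \in u); case: (y \in v); rewrite // !oddD (negbTE evP) ?(negbTE evQ).
Qed.

Definition r2_word u v x (p q : nat) (s o : bool) : seq letter :=
  u ++ [:: (p, true, s); (q, true, ~~ s)] ++ v ++
    (if o then [:: (p, false, s); (q, false, ~~ s)]
          else [:: (q, false, ~~ s); (p, false, s)]) ++ x.

Lemma gamma_term_R2_pair u v x (p q : nat) (s o : bool) :
  uniq (r2_word u v x p q s o) ->
  (gamma_term (oddpos (r2_word u v x p q s o)) (p, true, s) +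
   gamma_term (oddpos (r2_word u v x p q s o)) (q, true, ~~ s) = 0)%R.
Proof.
move=> uw.
have odb : oddpos (r2_word u v x p q s o) (q, false, ~~ s) =
           ~~ oddpos (r2_word u v x p q s o) (p, false, s).
  have wE : r2_word u v x p q s o = (u ++ [:: (p, true, s); (q, true, ~~ s)] ++ v) ++
      (if o then [:: (p, false, s); (q, false, ~~ s)]
            else [:: (q, false, ~~ s); (p, false, s)]) ++ x.
    by rewrite -!catA.
  case: o uw wE => uw wE; first exact: oddpos_adjacent uw wE.
  by rewrite (oddpos_adjacent uw wE) negbK.
have ob := oddpos_adjacent (s1 := u) uw erefl.
rewrite /gamma_term /= ob odb addNb addbN negbK -mulrDl -polyCD.
have -> : (sgnz (p, true, s) + sgnz (q, true, ~~ s) = 0)%R by rewrite /sgnz /=; case: (s).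
by rewrite polyC0 mul0r.
Qed.

Lemma perm_overs_r2_word u v x (p q : nat) (s o : bool) :
  perm_eq (overs (r2_word u v x p q s o))
          ([:: (p, true, s); (q, true, ~~ s)] ++ overs (u ++ v ++ x)).
Proof.
rewrite /r2_word /overs !filter_cat; case: o => /=; rewrite ?cats0;
exact: (permEl (perm_catCA _ [:: _; _] _)).
Qed.

Lemma gamma_parity_R2 u v x (p q : nat) (s o : bool) :
  p \notin map lab (u ++ v ++ x) -> q \notin map lab (u ++ v ++ x) ->
  uniq (r2_word u v x p q s o) ->
  gamma_parity (r2_word u v x p q s o) = gamma_parity (u ++ v ++ x).
Proof.
move=> pn qn uw; rewrite /gamma_parity (perm_big _ (perm_overs_r2_word _ _ _ _ _ _ _)).
rewrite big_cat /= !big_cons big_nil addr0 gamma_term_R2_pair // add0r.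
apply: eq_sum_gamma_term => l; rewrite mem_filter => /andP[_ lw].
have fresh y : lab y = lab l ->
    (y \notin [:: (p, true, s); (q, true, ~~ s)]) &&
    (y \notin if o then [:: (p, false, s); (q, false, ~~ s)]
              else [:: (q, false, ~~ s); (p, false, s)]).
  move=> eyl; have : lab y \notin [:: p; q].
    rewrite !inE negb_or eyl.
    by apply/andP; split; [apply: contraNneq pn | apply: contraNneq qn] => <-; rewrite map_f.
  rewrite -negb_or; apply: contra.
  by case: (o); rewrite !inE -!orbA => /or4P[] /eqP -> /=; rewrite eqxx ?orbT.
have /andP[l1 l2] := fresh l erefl; have /andP[dl1 dl2] := fresh (dual l) erefl.
by rewrite /r2_word !oddpos_insert_even //; case: (o).
Qed.

Lemma oddpos_swap (u r : seq letter) (s : letter * letter) t :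
  uniq (u ++ pair2 s ++ r) ->
  oddpos (u ++ swap2 s ++ r) t = oddpos (u ++ pair2 s ++ r) t (+) (t \in pair2 s).
Proof.
case: s => y z; rewrite /swap2 /pair2 /oddpos cat_uniq /= !negb_or.
move=> /and3P[_ /and3P[yu zu _] /andP[/andP[yz _] _]]; rewrite !index_cat /= !inE.
case tu: (t \in u).
  have /negbTE-> : t != y by apply: contraNneq yu => <-.
  have /negbTE-> : t != z by apply: contraNneq zu => <-.
  by rewrite addbF.
rewrite !(eq_sym _ t); have [-> | _] := eqVneq t y.
  by rewrite (negbTE yz) /= addn1 addn0 addbT.
by have [_ | _] := eqVneq t z; rewrite /= ?addn0 ?addn1 ?addbT ?negbK ?addbF.
Qed.

Definition r3_flip (s1 s2 s3 : letter * letter) (t : letter) : bool :=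
  (t \in pair2 s1) (+) (t \in pair2 s2) (+) (t \in pair2 s3).

Lemma perm_swap2 (s : letter * letter) : perm_eq (swap2 s) (pair2 s).
Proof. by rewrite /swap2 /pair2 (permEl (perm_catC [:: s.2] [:: s.1])). Qed.

Lemma perm_R3 u v y z s1 s2 s3 :
  perm_eq (u ++ swap2 s1 ++ v ++ swap2 s2 ++ y ++ swap2 s3 ++ z)
          (u ++ pair2 s1 ++ v ++ pair2 s2 ++ y ++ pair2 s3 ++ z).
Proof. by rewrite !(perm_cat2l, perm_cat (perm_swap2 _)). Qed.

Lemma oddpos_R3 u v y z s1 s2 s3 t :
  uniq (u ++ pair2 s1 ++ v ++ pair2 s2 ++ y ++ pair2 s3 ++ z) ->
  oddpos (u ++ swap2 s1 ++ v ++ swap2 s2 ++ y ++ swap2 s3 ++ z) t =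
  oddpos (u ++ pair2 s1 ++ v ++ pair2 s2 ++ y ++ pair2 s3 ++ z) t (+) r3_flip s1 s2 s3 t.
Proof.
move=> uw; have uniqP w : perm_eq w (u ++ pair2 s1 ++ v ++ pair2 s2 ++ y ++ pair2 s3 ++ z) -> uniq w.
  by move/perm_uniq ->.
have e1 := oddpos_swap (r := v ++ pair2 s2 ++ y ++ pair2 s3 ++ z) (s := s1) t uw.
have e2 := oddpos_swap (u := u ++ swap2 s1 ++ v) (r := y ++ pair2 s3 ++ z) (s := s2) t.
have e3 := oddpos_swap (u := u ++ swap2 s1 ++ v ++ swap2 s2 ++ y) (r := z) (s := s3) t.
rewrite -!catA in e2 e3.
rewrite e3 ?e2 ?e1 /r3_flip ?addbA //;
by apply: uniqP; rewrite !(perm_cat2l, perm_cat (perm_swap2 _)).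
Qed.

Lemma mem_pair2_seg o x y (t : letter) : (t \in pair2 (seg o x y)) = (t == x) || (t == y).
Proof. by case: o; rewrite /pair2 /seg /= !inE // orbC. Qed.

Lemma r3_config_dual T M B t : r3_config T M B -> r3_flip T M B (dual t) = r3_flip T M B t.
Proof.
case=> a [b [c [sa [sb [sc [oT [oM [oB [abc [-> [-> [-> _]]]]]]]]]]]].
rewrite /r3_flip !mem_pair2_seg -[dual t == _](inj_eq dual_inj) dualK.
move: abc; rewrite /= !inE negb_or => /andP[/andP[ab ac] /andP[bc _]].
case: t => [[n o] s]; rewrite /dual /= !xpair_eqE.
have [-> | na] := eqVneq n a.
  by rewrite eq_sym (negbTE ab) eq_sym (negbTE ac); case: o; case: (s == sa).
have [-> | nb] := eqVneq n b; first by rewrite eq_sym (negbTE bc); case: o; case: (s == sb).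
by case: (n == c); case: o; case: (s == sc).
Qed.

Lemma r3_triple_dual s1 s2 s3 t :
  r3_triple s1 s2 s3 -> r3_flip s1 s2 s3 (dual t) = r3_flip s1 s2 s3 t.
Proof.
case=> [|[|[|[|[|]]]]] /(r3_config_dual t); rewrite /r3_flip;
by do 2![case: (_ \in pair2 s1); case: (_ \in pair2 s2); case: (_ \in pair2 s3)].
Qed.

Lemma gamma_parity_R3 u v y z s1 s2 s3 : r3_triple s1 s2 s3 ->
  uniq (u ++ pair2 s1 ++ v ++ pair2 s2 ++ y ++ pair2 s3 ++ z) ->
  gamma_parity (u ++ swap2 s1 ++ v ++ swap2 s2 ++ y ++ swap2 s3 ++ z) =
  gamma_parity (u ++ pair2 s1 ++ v ++ pair2 s2 ++ y ++ pair2 s3 ++ z).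
Proof.
move=> r3 uw; rewrite /gamma_parity (perm_big _ (perm_filter ovr (perm_R3 _ _ _ _ _ _ _))).
apply: eq_sum_gamma_term => l _.
by rewrite !oddpos_R3 // r3_triple_dual // addbACA addbb addbF.
Qed.

Lemma gauss_wf_perm w w' : perm_eq w w' -> gauss_wf w -> gauss_wf w'.
Proof.
move=> ww' /gauss_wfP[uw dw iw]; apply/gauss_wfP; have mem_w := perm_mem ww'.
by split=> [|l|x y]; rewrite -?(perm_uniq ww') // -!mem_w; [exact: dw | exact: iw].
Qed.

Lemma gauss_wf_relab f w : injective f -> gauss_wf (map (relab f) w) <-> gauss_wf w.
Proof.
move=> f_inj; have r_inj := relab_inj f_inj.
split=> /gauss_wfP[uw dw iw]; apply/gauss_wfP; rewrite (map_inj_uniq r_inj) in uw *.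
  split=> // [l lw | x y xw yw exy oxy].
    by rewrite -(mem_map r_inj) -dual_relab dw ?map_f.
  by apply: r_inj; apply: iw; rewrite ?map_f //= /lab /= exy.
split=> // [_ /mapP[l lw ->] | _ _ /mapP[x xw ->] /mapP[y yw ->] /f_inj exy oxy].
  by rewrite dual_relab map_f ?dw.
by rewrite (iw x y).
Qed.

Lemma gauss_wf_cat s t : {in s & t, forall x y, lab x != lab y} ->
  gauss_wf (s ++ t) <-> gauss_wf s /\ gauss_wf t.
Proof.
move=> st; have ts : {in t & s, forall x y, lab x != lab y}.
  by move=> x y xt ys; rewrite eq_sym st.
have in_side (r r' : seq letter) l : {in r & r', forall x y, lab x != lab y} ->
    l \in r -> (dual l \in r) || (dual l \in r') -> dual l \in r.
  move=> rr' lr /orP[// | dr'].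
  by have := rr' l (dual l) lr dr'; rewrite lab_dual eqxx.
split=> [/gauss_wfP[] | [/gauss_wfP[us ds ins] /gauss_wfP[ut dt int]]].
  rewrite cat_uniq => /and3P[us _ ut] dw iw.
  have inj (r : seq letter) : {subset r <= s ++ t} -> {in r &, forall x y, lab x = lab y -> ovr x = ovr y -> x = y}.
    by move=> sub x y /sub xw /sub yw; apply: iw.
  split; apply/gauss_wfP; split=> //; try by apply: inj => z zr; rewrite mem_cat zr ?orbT.
    move=> l ls; apply: (in_side _ _ _ st ls).
    by rewrite -mem_cat; apply: dw; rewrite mem_cat ls.
  move=> l lt; apply: (in_side _ _ _ ts lt).
  by rewrite orbC -mem_cat; apply: dw; rewrite mem_cat lt orbT.
apply/gauss_wfP; split=> [|l | x y].
- rewrite cat_uniq us ut andbT /=; apply/hasPn => y yt; apply/negP => ys.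
  by have := st y y ys yt; rewrite eqxx.
- by rewrite !mem_cat => /orP[ls | lt]; [rewrite ds | rewrite dt ?orbT].
rewrite !mem_cat => /orP[xs | xt] /orP[ys | yt] exy; first exact: ins.
- by have := st x y xs yt; rewrite exy eqxx.
- by have := ts x y xt ys; rewrite exy eqxx.
exact: int.
Qed.

Definition r2_block (p q : nat) (s : bool) : seq letter :=
  [:: (p, true, s); (q, true, ~~ s); (p, false, s); (q, false, ~~ s)].

Lemma gauss_wf_r2_block (p q : nat) (s : bool) : p != q -> gauss_wf (r2_block p q s).
Proof.
move=> pq; have qp := pq; rewrite eq_sym in qp; apply/gauss_wfP; split.
- by rewrite /= !inE !xpair_eqE (negbTE pq) (negbTE qp) /= !andbF.
- by move=> l; rewrite !inE => /or4P[] /eqP ->; rewrite /dual /lab /ovr /pos /= !eqxx ?orbT.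
move=> x y; rewrite !inE => /or4P[] /eqP -> /or4P[] /eqP -> //=;
by rewrite /lab /= => E; rewrite E eqxx in pq.
Qed.

Lemma perm_r2_word u v x (p q : nat) (s o : bool) :
  perm_eq (r2_word u v x p q s o) (r2_block p q s ++ (u ++ v ++ x)).
Proof. by apply/permP => a; rewrite !count_cat /=; case: o => /=; lia. Qed.

Lemma gauss_wf_R2 u v x (p q : nat) (s o : bool) :
  p != q -> p \notin map lab (u ++ v ++ x) -> q \notin map lab (u ++ v ++ x) ->
  gauss_wf (r2_word u v x p q s o) <-> gauss_wf (u ++ v ++ x).
Proof.
move=> pq pn qn.
have fresh : {in r2_block p q s & u ++ v ++ x, forall y z, lab y != lab z}.
  have fresh_lab n : n \notin map lab (u ++ v ++ x) -> {in u ++ v ++ x, forall z, n != lab z}.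
    by move=> nw z zw; apply: contraNneq nw => ->; apply: map_f.
  move=> y z; rewrite !inE => /or4P[] /eqP ->;
  by [exact: (fresh_lab p pn z) | exact: (fresh_lab q qn z)].
split=> [/(gauss_wf_perm (perm_r2_word u v x p q s o)) /(gauss_wf_cat fresh)[] // | wf].
have ww' : perm_eq (r2_block p q s ++ (u ++ v ++ x)) (r2_word u v x p q s o).
  by rewrite perm_sym perm_r2_word.
apply: (gauss_wf_perm ww'); apply/(gauss_wf_cat fresh); split=> //.
exact: gauss_wf_r2_block.
Qed.

Lemma gstep_wf w w' : gstep w w' -> gauss_wf w <-> gauss_wf w'.
Proof.
case=> [n {}w | f {}w f_inj | u v x p q s o pq pn qn | u v y z s1 s2 s3 _].
- have ww' := permEl (perm_rot n w).
  by split; apply: gauss_wf_perm; rewrite // perm_sym.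
- exact: iff_sym (gauss_wf_relab w f_inj).
- exact: iff_sym (gauss_wf_R2 s o pq pn qn).
have ww' := perm_R3 u v y z s1 s2 s3.
by split; apply: gauss_wf_perm; rewrite // perm_sym.
Qed.

Lemma gstep_gamma w w' : gstep w w' -> gauss_wf w -> gamma w = gamma w'.
Proof.
move=> ww' wf; rewrite !gammaE -?(gstep_wf ww') //; case: ww' wf.
- by move=> n {}w wf; rewrite gamma_parity_rot.
- by move=> f {}w f_inj _; rewrite gamma_parity_relab.
- move=> u v x p q s o pq pn qn /(gauss_wf_R2 s o pq pn qn).
  by case/gauss_wfP=> uw _ _; rewrite gamma_parity_R2.
by move=> u v y z s1 s2 s3 r3 /gauss_wfP[uw _ _]; rewrite gamma_parity_R3.
Qed.

Lemma r23_equiv_wf K K' : r23_equiv K K' -> gauss_wf K <-> gauss_wf K'.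
Proof.
elim=> {K K'} [w w' /gstep_wf // | // | w w' _ IH | w w' w'' _ IH _ IH'].
  exact: iff_sym IH.
exact: iff_trans IH IH'.
Qed.

Lemma r23_equiv_gamma K K' : r23_equiv K K' -> gauss_wf K -> gamma K = gamma K'.
Proof.
elim=> {K K'} [w w' /gstep_gamma // | // | w w' ww' IH wf | w w' w'' ww' IH _ IH' wf].
  by rewrite IH // (r23_equiv_wf ww').
by rewrite IH // IH' // -(r23_equiv_wf ww').
Qed.

Theorem mainTheorem1 (K K' : seq letter) :
  gauss_wf K -> r23_equiv K K' ->
  gamma K = gamma K' /\ gammabar K = gammabar K'.
Proof.
move=> wf KK'; have gammaKK' := r23_equiv_gamma KK' wf.
by rewrite /gammabar gammaKK'.
Qed.
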